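(* Let $P$ be a metacyclic $2$-group which does not have maximal class. Then every subgroup $Q\le P$ with $Q\cong C_{2^k}\times C_{2^k}$ for some $k\ge 1$ satisfies $Q=\Omega_i(P)$ for some $i\ge 0$.
   Context: A $2$-group of order $2^n$ ($n\ge2$) has maximal class if its nilpotency class is $n-1$. Metacyclic: has a cyclic normal subgroup with cyclic quotient. $\Omega_i(P)=\langle x\in P: x^{2^i}=1\rangle$. *)

From mathcomp Require Import all_boot all_fingroup all_solvable all_algebra.
Set Implicit Arguments. Unset Strict Implicit. Unset Printing Implicit Defensive.

Definition maximal_class2 (gT : finGroupType) (P : {set gT}) : bool :=
  (2 <= logn 2 #|P|) && (nil_class P == (logn 2 #|P|).-1).

From mathcomp Require Import all_boot all_fingroup all_solvable all_algebra.
From mathcomp Require Import zify ring.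
From Stdlib Require Import Classical.

(* Let K = <[a]> be a cyclic normal subgroup of P with P / K cyclic.  Q has
   order 2^(2k) and exponent dividing 2^k, while Q :&: K and Q / K are cyclic
   of exponent dividing 2^k; hence both have order exactly 2^k.  So every
   element of K of order dividing 2^k lies in Q, and every x in P with
   x^(2^k) = 1 lies in Q K.  Pick b in Q generating Q modulo K.
   - If a^b = a^t with t = 1 (mod 4), the power formula
     (b^j a^i)^(2^k) = b^(j 2^k) a^(i 2^k s), s odd, shows that every x in P
     with x^(2^k) = 1 lies in Q; thus Q = Omega_k(P).
   - Otherwise, as b centralises Q :&: K of order 2^k, we get k = 1; then b
     is an involution outside K, |P : K| = 2, and P is a non-abelian 2-group
     with a cyclic maximal subgroup.  P is not a modular group (there
     [~ a, b]^2 = 1, forcing a^b = a^t with t = 1 (mod 4)), hence dihedral,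
     semidihedral or generalised quaternion, which have maximal class. *)

Set Implicit Arguments.
Unset Strict Implicit.
Unset Printing Implicit Defensive.

(* geom_sum t n = 1 + t + ... + t ^ (n - 1), the exponent produced by the
   n-th power of an element acting on a cyclic group as the t-th power. *)
Fixpoint geom_sum (t n : nat) : nat :=
  if n is n'.+1 then geom_sum t n' * t + 1 else 0.

Lemma geom_sumD t m n :
  geom_sum t (m + n) = geom_sum t m * t ^ n + geom_sum t n.
Proof.
elim: n => [|n IHn]; first by rewrite addn0 expn0 muln1 addn0.
by rewrite addnS /= IHn expnS; ring.
Qed.

Lemma geom_sum_2power t k :
  t %% 4 = 1 -> exists2 s, odd s & geom_sum t (2 ^ k) = 2 ^ k * s.
Proof.
move=> t4; elim: k => [|k [s odd_s IHk]]; first by exists 1.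
set v := t ^ 2 ^ k; have v4 : v %% 4 = 1 by rewrite -modnXm t4 exp1n.
have def_v : v = v %/ 4 * 4 + 1 by rewrite {1}(divn_eq v 4) v4.
exists (s * (v %/ 4 * 2 + 1)); first by rewrite oddM odd_s addn1 /= oddM andbF.
by rewrite expnS mul2n -addnn geom_sumD IHk -/v {1}def_v; ring.
Qed.

Lemma odd_sqr_mod4 s : odd s -> s ^ 2 %% 4 = 1.
Proof.
move=> odd_s; rewrite -(odd_double_half s) odd_s -mul2n.
have -> : (1 + 2 * s./2) ^ 2 = (s./2 * s./2 + s./2) * 4 + 1 by ring.
by rewrite modnMDl.
Qed.

Lemma dvdn_mul_eq_sqr N x y :
  0 < N -> x %| N -> y %| N -> x * y = N * N -> x = N /\ y = N.
Proof. by move=> N_gt0 /(dvdn_leq N_gt0) ? /(dvdn_leq N_gt0) ?; nia. Qed.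

Lemma mod4_of_double m r : 2 < m -> r * 2 = 2 %[mod 2 ^ m] -> r %% 4 = 1.
Proof.
move=> m_gt2; have dvd8 : 8 %| 2 ^ m by rewrite (@dvdn_exp2l 2 3).
by move=> /(congr1 (modn^~ 8)); rewrite !modn_dvdm //; lia.
Qed.

Local Open Scope group_scope.

Lemma cyclic_quotient_cover (gT : finGroupType) (Q K : {group gT}) :
  Q \subset 'N(K) -> cyclic (Q / K) -> exists2 b, b \in Q & Q \subset <[b]> * K.
Proof.
move=> nKQ /cyclicP[X defX]; have /morphimP[b nKb Qb defXb] : X \in Q / K.
  by rewrite defX cycle_id.
exists b => //; have nKbb : <[b]> \subset 'N(K) by rewrite cycle_subG.
by rewrite (normC nKbb) -quotientSK // quotient_cycle // -defXb -defX.
Qed.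

Lemma cyclic_involution_square (gT : finGroupType) (C : {group gT}) y :
    cyclic C -> 4 %| #|C| -> y \in C -> y ^+ 2 = 1 ->
  exists2 z, z \in C & y = z ^+ 2.
Proof.
move=> /cyclicP[c ->]; rewrite -orderE => dvd4c /cycleP[j ->].
rewrite -expgM => /eqP; rewrite -order_dvdn => dvd_c_2j.
have /dvdnP[i ->] : 2 %| j.
  by rewrite -(@dvdn_pmul2r 2) // (dvdn_trans dvd4c dvd_c_2j).
by exists (c ^+ i); rewrite ?mem_cycle // -expgM.
Qed.

Lemma conj_in_cycle (gT : finGroupType) (a x : gT) :
  x \in 'N(<[a]>) -> exists r, a ^ x = a ^+ r.
Proof. by move=> nAx; apply/cycleP; rewrite memJ_norm ?cycle_id. Qed.

Lemma expg_coprime_cancel (gT : finGroupType) (y : gT) e s :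
  coprime #[y] s -> y ^+ (e * s) = 1 -> y ^+ e = 1.
Proof.
by move=> co_ys /eqP; rewrite -order_dvdn Gauss_dvdl // order_dvdn => /eqP.
Qed.

Lemma conj_power_odd (gT : finGroupType) (a d : gT) s :
  2.-elt a -> a != 1 -> a ^ d = a ^+ s -> odd s.
Proof.
move=> /p_natP[m om] nt_a a_d.
have gen_as : generator <[a]> (a ^+ s).
  rewrite /generator eq_sym eqEcard cycle_subG mem_cycle /=.
  by rewrite -!orderE -a_d orderJ.
rewrite generator_coprime om in gen_as.
have m_gt0 : 0 < m.
  by case: m om {gen_as} => // om; rewrite -order_eq1 om in nt_a.
by rewrite -coprime2n -(coprime_pexpl _ _ m_gt0).
Qed.

Lemma modular_derived_order2 (gT : finGroupType) (G : {group gT}) :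
  2.-group G -> extremal_class G = ModularGroup ->
  3 < logn 2 #|G| /\ #|G^`(1)| = 2.
Proof.
move=> pG /modular_group_classP[p p_pr [n n_ge isoM]].
have n_gt2 : 2 < n := leq_trans (leq_addl _ 3) n_ge.
have oG : #|G| = (p ^ n)%N by rewrite (card_isog isoM) card_modular_group.
have p2 : p = 2.
  move: pG; rewrite /pgroup oG pnatX (pnatE _ p_pr) orbC eqn0Ngt.
  by rewrite (ltnW (ltnW n_gt2)) => /eqnP.
subst p; have [[x y] genG modG] := generators_modular_group p_pr n_gt2 isoM.
have [_ _ [_ oD _] _ _] := modular_group_structure p_pr n_gt2 genG isoM modG.
by rewrite oG pfactorK //; move: n_ge; rewrite eqxx.
Qed.

Section Twisting.
Variables (gT : finGroupType) (a u : gT) (t : nat).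
Hypothesis a_u : a ^ u = a ^+ t.

Lemma conjg_twistX j : a ^ (u ^+ j) = a ^+ (t ^ j).
Proof.
elim: j => [|j IHj]; first by rewrite expg0 conjg1 expn0 expg1.
by rewrite expgSr conjgM IHj conjXg a_u -expgM expnSr mulnC.
Qed.

Lemma expg_twisted i n : (u * a ^+ i) ^+ n = u ^+ n * a ^+ (i * geom_sum t n).
Proof.
elim: n => [|n IHn]; first by rewrite !expg0 muln0 expg0 mulg1.
rewrite expgSr IHn -!mulgA (mulgA (a ^+ _) u) (conjgC (a ^+ _) u) conjXg a_u.
rewrite -!expgM expgSr -!mulgA -expgD /=; congr (_ * (_ * _ ^+ _)); ring.
Qed.

End Twisting.

Lemma expg_pair (gT1 gT2 : finGroupType) (u : gT1 * gT2) n :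
  u ^+ n = (u.1 ^+ n, u.2 ^+ n).
Proof. by elim: n => [|n IHn] //; rewrite !expgS IHn. Qed.

Lemma homocyclic_facts (gT : finGroupType) (Q : {group gT}) k : 0 < k ->
  Q \isog [set: 'Z_(2 ^ k) * 'Z_(2 ^ k)] ->
  [/\ #|Q| = (2 ^ k * 2 ^ k)%N, abelian Q & exponent Q %| 2 ^ k].
Proof.
move=> k_gt0 isoQ; have oZ : #|'Z_(2 ^ k)| = (2 ^ k)%N.
  by rewrite card_ord Zp_cast // -{1}(expn0 2) ltn_exp2l.
split; first by rewrite (card_isog isoQ) cardsT card_prod oZ.
  rewrite (isog_abelian isoQ); apply/centsP=> -[x1 x2] _ [y1 y2] _.
  by congr (_, _); apply: Zp_mulgC.
rewrite (exponent_isog isoQ); apply/exponentP=> u _.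
have Zexp (x : 'Z_(2 ^ k)) : x ^+ (2 ^ k) = 1.
  by rewrite -[X in x ^+ X]oZ -cardsT expg_cardG ?inE.
by rewrite expg_pair !Zexp.
Qed.

Lemma mem_cyclic_order_dvd (gT : finGroupType) (G H : {group gT}) x :
  cyclic G -> H \subset G -> x \in G -> #[x] %| #|H| -> x \in H.
Proof.
by move=> cycG sHG Gx; rewrite -cycle_subG -(cardSg_cyclic cycG) ?cycle_subG.
Qed.

Lemma Ohm_eq_Ldiv_sub (gT : finGroupType) (p k : nat) (P Q : {group gT}) :
  p.-group P -> Q \subset P -> exponent Q %| p ^ k ->
  'Ldiv_(p ^ k)(P) \subset Q -> Q :=: 'Ohm_k(P).
Proof.
move=> pP sQP expQ sLQ; rewrite (OhmE k pP); apply/eqP; rewrite eqEsubset.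
by rewrite gen_subG sLQ sub_gen // subsetI sQP sub_LdivT.
Qed.

Section MetacyclicSubgroup.

Variables (gT : finGroupType) (P K Q : {group gT}) (k : nat).
Hypotheses (cycK : cyclic K) (nsKP : K <| P) (cycPK : cyclic (P / K)).
Hypotheses (sQP : Q \subset P) (oQ : #|Q| = (2 ^ k * 2 ^ k)%N).
Hypothesis expQ : exponent Q %| 2 ^ k.

Let nKP : P \subset 'N(K) := normal_norm nsKP.
Let nKQ : Q \subset 'N(K) := subset_trans sQP nKP.
Let sKP : K \subset P := normal_sub nsKP.

Lemma card_QiK_quotient : #|Q :&: K| = (2 ^ k)%N /\ #|Q / K| = (2 ^ k)%N.
Proof.
have cycQiK : cyclic (Q :&: K) := cyclicS (subsetIr Q K) cycK.
have cycQK : cyclic (Q / K) := cyclicS (quotientS K sQP) cycPK.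
apply: dvdn_mul_eq_sqr; first by rewrite expn_gt0.
- by rewrite -exponent_cyclic // (dvdn_trans (exponentS (subsetIl Q K))).
- by rewrite -exponent_cyclic // (dvdn_trans (exponent_quotient Q K)).
by rewrite card_quotient // -indexgI Lagrange ?subsetIl.
Qed.

Lemma mem_Q_of_K n : n \in K -> n ^+ (2 ^ k) = 1 -> n \in Q.
Proof.
move=> Kn n1; apply: (subsetP (subsetIl Q K)).
apply: mem_cyclic_order_dvd cycK (subsetIr Q K) Kn _.
by rewrite card_QiK_quotient.1 order_dvdn n1.
Qed.

Lemma mem_QK_of_P x : x \in P -> x ^+ (2 ^ k) = 1 -> x \in Q * K.
Proof.
move=> Px x1; have nKx := subsetP nKP x Px.
have : coset K x \in Q / K.
  apply: mem_cyclic_order_dvd cycPK (quotientS K sQP) (mem_quotient K Px) _.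
  by rewrite card_QiK_quotient.2 order_dvdn -morphX // x1 morph1.
rewrite (normC nKQ) -quotientK //.
by move=> QKx; apply/morphpreP; split; rewrite // inE.
Qed.

Variables a b : gT.
Hypotheses (defK : K :=: <[a]>) (Qb : b \in Q).

Section Twist1mod4.

Hypotheses (pP : 2.-group P) (sQbK : Q \subset <[b]> * K).
Variable t : nat.
Hypotheses (t4 : (t %% 4 = 1)%N) (a_b : a ^ b = a ^+ t).

Lemma Ohm_eq_twist1mod4 : Q :=: 'Ohm_k(P).
Proof.
apply: Ohm_eq_Ldiv_sub pP sQP expQ _; apply/subsetP=> x /LdivP[Px x1].
have : x \in <[b]> * K * K.
  by apply: (subsetP (mulSg K sQbK)); apply: mem_QK_of_P.
rewrite -mulgA mulGid => /mulsgP[_ n /cycleP[j ->] Kn def_x].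
rewrite def_x groupM ?groupX //.
move: Kn; rewrite defK => /cycleP[i def_n]; rewrite def_n.
have tj4 : (t ^ j %% 4 = 1)%N by rewrite -modnXm t4 exp1n.
have [s odd_s geom_s] := geom_sum_2power k tj4.
have Kai : a ^+ i \in K by rewrite groupX // defK cycle_id.
have a2elt : 2.-elt (a ^+ i) := mem_p_elt pP (subsetP sKP _ Kai).
apply: mem_Q_of_K => //.
apply: (@expg_coprime_cancel _ _ _ s).
  by have /p_natP[e ->] := a2elt; rewrite coprimeXl ?coprime2n.
move: x1; rewrite def_x def_n (expg_twisted (conjg_twistX a_b j)).
by rewrite expgAC (exponentP expQ) // expg1n mul1g geom_s -expgM.
Qed.

End Twist1mod4.

Section NoTwist.

Hypotheses (pP : 2.-group P) (abQ : abelian Q).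

Let Ka : a \in K. Proof. by rewrite defK cycle_id. Qed.
Let Pb : b \in P. Proof. exact: subsetP sQP b Qb. Qed.
Let nKb : b \in 'N(K). Proof. exact: subsetP nKQ b Qb. Qed.
Let a2elt : 2.-elt a. Proof. exact: mem_p_elt pP (subsetP sKP a Ka). Qed.

(* Since b centralises Q :&: K, of order 2^k, it acts as t = 1 (mod 2^k). *)
Lemma twist_mod_order r : a ^ b = a ^+ r -> r = 1 %[mod 2 ^ k].
Proof.
move=> a_b; have /cyclicP[g defg] := cyclicS (subsetIr Q K) cycK.
have /setIP[Qg Kg] : g \in Q :&: K by rewrite defg cycle_id.
have og : #[g] = (2 ^ k)%N by rewrite orderE -defg card_QiK_quotient.1.
have g_b : g ^ b = g by apply/conjg_fixP/commgP; apply: (centsP abQ).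
move: Kg; rewrite defK => /cycleP[e def_g].
have : g ^+ r = g ^+ 1 by rewrite expg1 -{2}g_b def_g conjXg a_b -!expgM mulnC.
by move/eqP; rewrite eq_expg_mod_order og => /eqP.
Qed.

Hypothesis k_gt0 : 0 < k.
Hypothesis no_twist : ~ exists t, (t %% 4 = 1)%N /\ a ^ b = a ^+ t.

Let no_twist1 : a ^ b <> a.
Proof. by move=> a_b; apply: no_twist; exists 1%N; rewrite expg1. Qed.

Lemma k_eq1 : k = 1%N.
Proof.
apply/eqP; rewrite eqn_leq k_gt0 andbT leqNgt; apply/negP => k_gt1.
have [r a_b] : exists r, a ^ b = a ^+ r by apply: conj_in_cycle; rewrite -defK.
apply: no_twist; exists r; split => //.
have dvd4 : 4 %| 2 ^ k by rewrite (@dvdn_exp2l 2 2).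
by rewrite -(modn_dvdm r dvd4) (twist_mod_order a_b) modn_dvdm.
Qed.

Lemma b_notin_K : b \notin K.
Proof.
apply/negP => Kb; apply: no_twist1; apply/conjg_fixP/commgP.
exact: (centsP (cyclic_abelian cycK)).
Qed.

Lemma a_neq1 : a != 1.
Proof. by apply: contraTneq isT => a1; case: no_twist1; rewrite a1 conj1g. Qed.

Lemma b_involution : b ^+ 2 = 1.
Proof. by have := exponentP expQ b Qb; rewrite k_eq1. Qed.

(* K is maximal in P: otherwise b would be a square d^2 modulo K, and would
   act on K as an odd square power, i.e. as t = 1 (mod 4). *)
Lemma index_K : #|P : K| = 2%N.
Proof.
rewrite -card_quotient //; have [f oPK] := p_natP (quotient_pgroup K pP).
have PKb : coset K b \in P / K by rewrite mem_quotient.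
have ntb : coset K b != 1.
  by apply: contra b_notin_K => /eqP; apply: coset_idr.
case: f oPK => [|[|f]] oPK //.
  have /eqP triv : P / K :==: 1 by rewrite trivg_card1 oPK.
  by move: PKb ntb; rewrite triv => /set1gP->; rewrite eqxx.
exfalso; have [z PKz def_bK] : exists2 z, z \in P / K & coset K b = z ^+ 2.
  apply: cyclic_involution_square cycPK _ PKb _.
    by rewrite oPK (@dvdn_exp2l 2 2).
  by rewrite -morphX // b_involution morph1.
case/morphimP: PKz def_bK => d nKd Pd ->; rewrite -morphX //.
move/(rcoset_kercosetP nKb (groupX 2 nKd)) => /rcosetP[n Kn def_b].
have [s a_d] : exists s, a ^ d = a ^+ s by apply: conj_in_cycle; rewrite -defK.
apply: no_twist; exists (s ^ 2)%N; split.
  exact: odd_sqr_mod4 (conj_power_odd a2elt a_neq1 a_d).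
have a_n : a ^ n = a.
  by apply/conjg_fixP/commgP; apply: (centsP (cyclic_abelian cycK)).
by rewrite def_b conjgM a_n (conjg_twistX a_d 2).
Qed.

Lemma card_P_order_a :
  exists m, [/\ 0 < m, #[a] = (2 ^ m)%N & #|P| = (2 ^ m.+1)%N].
Proof.
have [m om] := p_natP a2elt; exists m; split => //.
  by case: m om => // om; case/negP: a_neq1; rewrite -order_eq1 om.
by rewrite -(Lagrange sKP) index_K defK -orderE om expnSr.
Qed.

(* P is not a modular group: there [~ a, b]^2 = 1, so b acts as a power
   t = 1 (mod 4). *)
Lemma not_modular : extremal_class P != ModularGroup.
Proof.
have [m [_ om oP]] := card_P_order_a.
apply/eqP => /(modular_derived_order2 pP).
rewrite oP pfactorK // ltnS => -[m_gt2 oP'].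
have [r a_b] : exists r, a ^ b = a ^+ r by apply: conj_in_cycle; rewrite -defK.
apply: no_twist; exists r; split => //; apply: (mod4_of_double m_gt2).
apply/eqP; rewrite -om -eq_expg_mod_order; apply/eqP.
have w_sq : [~ a, b] ^+ 2 = 1.
  by rewrite -oP' expg_cardG // mem_commg // (subsetP sKP).
have Kw : [~ a, b] \in K by rewrite commgEl a_b groupM ?groupV ?groupX.
have caw : commute a [~ a, b] by apply: (centsP (cyclic_abelian cycK)).
by rewrite expgM -(mulKVg a (a ^+ r)) -a_b -commgEl expgMn // w_sq mulg1.
Qed.

(* A non-abelian 2-group with a cyclic maximal subgroup that is not modular
   is dihedral, semidihedral or generalised quaternion, of maximal class. *)
Lemma untwisted_maximal_class : maximal_class2 P.
Proof.
have [m [m_gt0 om oP]] := card_P_order_a.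
rewrite /maximal_class2 oP pfactorK // ltnS m_gt0 /=.
have nabP : ~~ abelian P.
  apply: contra_notN no_twist1 => abP; apply/conjg_fixP/commgP.
  by apply: (centsP abP); rewrite // (subsetP sKP).
have ob : #[b] = 2%N.
  apply: nt_prime_order b_involution _ => //.
  by apply: contraNneq b_notin_K => ->.
have genP : extremal_generators P 2 m.+1 (a, b).
  by split; rewrite ?om ?inE -?defK ?b_notin_K // (subsetP sKP).
have := maximal_cycle_extremal pP nabP cycK sKP index_K.
rewrite (negPf not_modular) /= => ext2.
case: (extremal2_structure genP ext2 _) => [|_ [_ _ _ -> //] _ _ _].
by rewrite ob eqxx implybT.
Qed.

End NoTwist.
End MetacyclicSubgroup.

Theorem lemma4p17 (gT : finGroupType) (P : {group gT}) :
  (2.-group P)%N -> metacyclic P -> ~~ maximal_class2 P ->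
  forall (Q : {group gT}) (k : nat), 1 <= k -> Q \subset P ->
    Q \isog [set: 'Z_(2 ^ k) * 'Z_(2 ^ k)] ->
    exists i : nat, Q :=: 'Ohm_i(P).
Proof.
move=> pP /metacyclicP[K [cycK nsKP cycPK]] not_max Q k k_gt0 sQP isoQ.
have [oQ abQ expQ] := homocyclic_facts k_gt0 isoQ.
have nKQ : Q \subset 'N(K) := subset_trans sQP (normal_norm nsKP).
have [b Qb sQbK] := cyclic_quotient_cover nKQ (cyclicS (quotientS K sQP) cycPK).
have [a defK] := cyclicP cycK.
exists k.
have [[t [t4 a_b]] | no_twist] :=
  classic (exists t, (t %% 4 = 1)%N /\ a ^ b = a ^+ t).
  exact: (Ohm_eq_twist1mod4 cycK nsKP cycPK sQP oQ expQ defK Qb pP sQbK t4 a_b).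
case/negP: not_max.
exact: (untwisted_maximal_class cycK nsKP cycPK sQP oQ expQ defK Qb pP abQ
         k_gt0 no_twist).
Qed.
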